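(* Let $\mathcal{M}\subseteq 2^N$ be a matroid on $N=[n]$. Let the elements have distinct nonnegative weights with $w(\{1\})>\dots>w(\{n\})$. Let $k$ satisfy the standing assumptions below, and let $p\in[\varepsilon(k),1/2]$. Let $X_1,\dots,X_n\sim\mathrm{Ber}(2p)$ and $Y_1,\dots,Y_n\sim\mathrm{Ber}(1/2)$ be mutually independent. Set $S=\{i:X_i=1,Y_i=1\}$ and $S^+=S\cap\mathrm{OPT}(N,\mathcal{M}^k)$. Then \[ \Pr\bigl[\varphi(S^+,\mathcal{M})\ge(1+\varepsilon(pk))pk\bigr]\le 1/n^3 . \]
   Context: Matroids are identified with their families of independent sets. $\mathcal{M}^k$ is the $k$-fold union of $\mathcal{M}$: the family of sets partitionable into $k$ members of $\mathcal{M}$. $\mathrm{OPT}(N,\mathcal{M}^k)$ is the maximum-weight set in $\mathcal{M}^k$, where the weight of a set is the sum of its elements' weights; it is unique since weights are distinct. The covering number $\varphi(S,\mathcal{M})$ is the least $r\in\mathbb{N}$ such that $S$ can be partitioned into $r$ members of $\mathcal{M}$. Standing assumptions: $\varepsilon(x)=C\sqrt{\log(n)/x}$, where $C$ is a sufficiently large absolute constant (e.g. $C\in[10,20]$, such that $\log(1/\varepsilon(k))-2$ is a positive integer), and $160^2\log n\le k\le n$. *)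

From HB Require Import structures.
From mathcomp Require Import all_boot all_order all_algebra.
From mathcomp Require Import boolp reals exp.
Set Implicit Arguments. Unset Strict Implicit. Unset Printing Implicit Defensive.
Import Order.TTheory GRing.Theory Num.Theory.
Local Open Scope ring_scope.

(* A matroid on N = 'I_n, identified with its family of independent sets. *)
Definition is_matroid (n : nat) (M : {set {set 'I_n}}) : Prop :=
  [/\ set0 \in M,
      (forall A B : {set 'I_n}, B \in M -> A \subset B -> A \in M) &
      (forall A B : {set 'I_n}, A \in M -> B \in M -> #|A| < #|B| ->
         exists2 x, x \in B :\: A & x |: A \in M)]%N.

Definition partitionable (n : nat) (M : {set {set 'I_n}}) (S : {set 'I_n})
  (r : nat) : Prop :=
  exists P : 'I_r -> {set 'I_n},
    [/\ forall i j, i != j -> [disjoint P i & P j],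
        \bigcup_(i < r) P i = S &
        forall i, P i \in M].

Definition kfold_union (n : nat) (M : {set {set 'I_n}}) (k : nat)
  (S : {set 'I_n}) : Prop := partitionable M S k.

Definition setw (R : realType) (n : nat) (w : 'I_n -> R) (S : {set 'I_n}) : R :=
  \sum_(i in S) w i.

Definition is_OPT (R : realType) (n : nat) (M : {set {set 'I_n}}) (k : nat)
  (w : 'I_n -> R) (T : {set 'I_n}) : Prop :=
  kfold_union M k T /\
  forall T', kfold_union M k T' -> setw w T' <= setw w T.

(* If no such r exists (phi = infinity) we return n.+1, which
   exceeds every finite covering number (a finite one is at most #|S| <= n). *)
Definition phi (n : nat) (M : {set {set 'I_n}}) (S : {set 'I_n}) : nat :=
  match pselect (exists r, partitionable M S r) with
  | left h =>
      @ex_minn (fun r => `[< partitionable M S r >])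
        (let: ex_intro r hr := h in ex_intro _ r (asboolT hr))
  | right _ => n.+1
  end.

Definition eps (R : realType) (C : R) (n : nat) (x : R) : R :=
  C * Num.sqrt (ln (n%:R) / x).

(* Outcomes: omega i = (X_i, Y_i), with X_i ~ Ber(2p), Y_i ~ Ber(1/2), all
   mutually independent: product probability mass. *)
Definition outcome_prob (R : realType) (n : nat) (p : R)
  (om : {ffun 'I_n -> bool * bool}) : R :=
  \prod_(i < n) ((if (om i).1 then 2 * p else 1 - 2 * p) * (1 / 2)).

Definition Pr (R : realType) (n : nat) (p : R)
  (E : {ffun 'I_n -> bool * bool} -> bool) : R :=
  \sum_(om | E om) outcome_prob p om.

Definition sampleS (n : nat) (om : {ffun 'I_n -> bool * bool}) : {set 'I_n} :=
  [set i | (om i).1 && (om i).2].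

(* Write e = eps(p k).  If phi(S^+) >= (1 + e) p k, then S^+ cannot be
   partitioned into q >= (1 + e) p k - 1 independent sets, so by Edmonds'
   covering theorem (a consequence of Rado's theorem on independent
   transversals) some A <= S^+ has |A| > q r(A).  A basis B of A spans A
   inside T, and as T is a union of k independent sets, the span of B inside
   T has at most k |B| elements.  Hence S meets a set of size at most k |B|
   in more than q |B| points; since S has density p, a Chernoff bound makes
   this happen with probability at most n^(-5|B|).  A union bound over
   nonempty B gives (1 + n^-5)^n - 1 <= n^-3. *)

From HB Require Import structures.
From mathcomp Require Import all_boot all_order all_algebra.
From mathcomp Require Import boolp reals exp sequences.
From mathcomp Require Import zify ring lra.
Import Order.TTheory GRing.Theory Num.Theory.
Set Implicit Arguments. Unset Strict Implicit. Unset Printing Implicit Defensive.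

Section MatroidRank.

Variables (n : nat) (M : {set {set 'I_n}}).

Definition rank (A : {set 'I_n}) : nat :=
  \big[maxn/0%N]_(B in M | B \subset A) #|B|.

Lemma card_le_rank (A B : {set 'I_n}) : B \in M -> B \subset A -> #|B| <= rank A.
Proof. by move=> MB sBA; rewrite /rank (leq_bigmax_cond B) // MB. Qed.

Hypothesis matroidM : is_matroid M.

Lemma indep0 : set0 \in M.
Proof. by case: matroidM. Qed.

Lemma indepS (A B : {set 'I_n}) : B \in M -> A \subset B -> A \in M.
Proof. by case: matroidM => _ + _; apply. Qed.

Lemma indep_augment (A B : {set 'I_n}) : A \in M -> B \in M -> #|A| < #|B| ->
  exists2 x, x \in B :\: A & x |: A \in M.
Proof. by case: matroidM => _ _; apply. Qed.

Lemma rank_basis (A : {set 'I_n}) :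
  exists B, [/\ B \in M, B \subset A & #|B| = rank A].
Proof.
have [B /andP[MB sBA] ->] :
    {B | B \in [pred B | (B \in M) && (B \subset A)] & rank A = #|B|}.
  apply: eq_bigmax_cond; apply/card_gt0P; exists set0.
  by rewrite inE indep0 sub0set.
by exists B.
Qed.

Lemma rank_le_card (A : {set 'I_n}) : rank A <= #|A|.
Proof. by have [B [_ sBA <-]] := rank_basis A; apply: subset_leq_card. Qed.

Lemma indep_of_card_le_rank (A : {set 'I_n}) : #|A| <= rank A -> A \in M.
Proof.
have [B [MB sBA cardB]] := rank_basis A => leAr.
suff <- : B = A by [].
by apply/eqP; rewrite eqEcard sBA cardB.
Qed.

Lemma subset_leq_rank (A B : {set 'I_n}) : A \subset B -> rank A <= rank B.
Proof.
have [I [MI sIA <-]] := rank_basis A => sAB.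
exact: card_le_rank (subset_trans sIA sAB).
Qed.

Lemma rank0 : rank set0 = 0.
Proof. by apply/eqP; rewrite -leqn0 -(cards0 'I_n) rank_le_card. Qed.

Lemma indep_extend_basis (X I : {set 'I_n}) : I \in M -> I \subset X ->
  exists K, [/\ K \in M, I \subset K, K \subset X & #|K| = rank X].
Proof.
have [B [MB sBX cardB]] := rank_basis X.
have [d] := ubnP (rank X - #|I|); elim: d I => // d IH I ltd MI sIX.
have [leXI | ltIX] := leqP (rank X) #|I|.
  by exists I; split=> //; apply/eqP; rewrite eqn_leq card_le_rank // leXI.
have ltIB : #|I| < #|B| by rewrite cardB.
have [x /setDP[xB xI] MxI] := indep_augment MI MB ltIB.
have [||K [MK sxIK sKX cardK]] := IH (x |: I) _ MxI.
- by rewrite cardsU1 xI; lia.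
- by rewrite subUset sub1set (subsetP sBX) // sIX.
by exists K; split=> //; apply: subset_trans sxIK; apply: subsetUr.
Qed.

Lemma rank_submod (A B : {set 'I_n}) :
  rank (A :|: B) + rank (A :&: B) <= rank A + rank B.
Proof.
have [I [MI sIAB <-]] := rank_basis (A :&: B).
have sIU : I \subset A :|: B.
  by apply: subset_trans sIAB (subset_trans (subsetIl _ _) (subsetUl _ _)).
have [K [MK sIK sKU <-]] := indep_extend_basis MI sIU.
have le_rank X : #|K :&: X| <= rank X.
  by apply: card_le_rank (subsetIr _ _); apply: indepS MK (subsetIl _ _).
have := le_rank A; have := le_rank B.
have KU : K :&: A :|: K :&: B = K by rewrite -setIUr; apply/setIidPl.
have sII : I \subset (K :&: A) :&: (K :&: B) by rewrite setIACA setIid subsetI sIK.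
have := cardsUI (K :&: A) (K :&: B); rewrite KU.
have := subset_leq_card sII; lia.
Qed.

End MatroidRank.

Section Rado.

Variables (n q : nat) (M : {set {set 'I_n}}).
Hypothesis matroidM : is_matroid M.

Definition slice (X : {set 'I_n * 'I_q}) (j : 'I_q) : {set 'I_n} :=
  [set s | (s, j) \in X].

(* The rank function of the direct sum of q copies of M, on 'I_n * 'I_q. *)
Definition copies_rank (X : {set 'I_n * 'I_q}) : nat :=
  \sum_(j < q) rank M (slice X j).

Definition colour_graph (F : 'I_n -> {set 'I_q}) (J : {set 'I_n}) :
  {set 'I_n * 'I_q} := [set x | (x.1 \in J) && (x.2 \in F x.1)].

Definition rado_cond (S : {set 'I_n}) (F : 'I_n -> {set 'I_q}) : bool :=
  [forall J : {set 'I_n},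
     (J \subset S) ==> (#|J| <= copies_rank (colour_graph F J))].

Definition independent_colouring (S : {set 'I_n}) (F : 'I_n -> {set 'I_q})
  (c : 'I_n -> option 'I_q) : Prop :=
  (forall s, s \in S -> exists2 j, c s = Some j & j \in F s) /\
  (forall j, [set s in S | c s == Some j] \in M).

Lemma rado_condP (S : {set 'I_n}) F : reflect
  (forall J : {set 'I_n}, J \subset S -> #|J| <= copies_rank (colour_graph F J))
  (rado_cond S F).
Proof.
apply: (iffP forallP) => [H J sJS | H J]; first exact: implyP (H J) sJS.
by apply/implyP; apply: H.
Qed.

Lemma copies_rank_mono (X Y : {set 'I_n * 'I_q}) :
  X \subset Y -> copies_rank X <= copies_rank Y.
Proof.
move=> sXY; apply: leq_sum => j _; apply: subset_leq_rank => //.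
by apply/subsetP => s; rewrite !inE => /(subsetP sXY).
Qed.

Lemma copies_rank_submod (X Y : {set 'I_n * 'I_q}) :
  copies_rank (X :|: Y) + copies_rank (X :&: Y) <= copies_rank X + copies_rank Y.
Proof.
rewrite /copies_rank -!big_split /=; apply: leq_sum => j _.
have -> : slice (X :|: Y) j = slice X j :|: slice Y j by apply/setP => s; rewrite !inE.
have -> : slice (X :&: Y) j = slice X j :&: slice Y j by apply/setP => s; rewrite !inE.
exact: rank_submod.
Qed.

Lemma copies_rank0 : copies_rank set0 = 0.
Proof.
rewrite /copies_rank big1 // => j _.
have -> : slice set0 j = set0 by apply/setP => s; rewrite !inE.
exact: rank0.
Qed.

Definition drop_colour (F : 'I_n -> {set 'I_q}) (s0 : 'I_n) (j : 'I_q) :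
  'I_n -> {set 'I_q} := fun s => if s == s0 then F s0 :\ j else F s.

Lemma drop_colour_sub (F : 'I_n -> {set 'I_q}) s0 j s :
  drop_colour F s0 j s \subset F s.
Proof. by rewrite /drop_colour; case: eqP => [->|_]; [apply: subsetDl|]. Qed.

Lemma drop_colour_sum (S : {set 'I_n}) (F : 'I_n -> {set 'I_q}) s0 j :
  s0 \in S -> j \in F s0 ->
  (\sum_(s in S) #|drop_colour F s0 j s|).+1 = \sum_(s in S) #|F s|.
Proof.
move=> Ss0 Fj; rewrite (bigD1 s0) //= [RHS](bigD1 s0) //= /drop_colour eqxx.
rewrite (cardsD1 j (F s0)) Fj add1n; congr (_ + _).+1.
by apply: eq_bigr => s /andP[_ /negPf ->].
Qed.

Lemma rado_cond_violator (S J : {set 'I_n}) (F : 'I_n -> {set 'I_q}) s0 j :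
  rado_cond S F -> J \subset S ->
  copies_rank (colour_graph (drop_colour F s0 j) J) < #|J| -> s0 \in J.
Proof.
move=> /rado_condP radoF sJS; apply: contraLR => Js0; rewrite -leqNgt.
suff -> : colour_graph (drop_colour F s0 j) J = colour_graph F J by apply: radoF.
apply/setP => -[s i]; rewrite !inE /= /drop_colour.
by case: eqP => [->|//]; rewrite (negPf Js0).
Qed.

(* The heart of Rado's theorem: two violating sets J1, J2 for the two
   deletions would, by submodularity of copies_rank, make J1 :|: J2 and
   (J1 :&: J2) :\ s0 together violate the condition for F. *)
Lemma rado_cond_drop_colour (S : {set 'I_n}) (F : 'I_n -> {set 'I_q}) s0 j1 j2 :
  rado_cond S F -> s0 \in S -> j1 != j2 ->
  rado_cond S (drop_colour F s0 j1) || rado_cond S (drop_colour F s0 j2).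
Proof.
move=> radoF Ss0 j12; have radoF' := elimT (rado_condP S F) radoF.
apply: contraT; rewrite negb_or => /andP[/forallPn[J1 +] /forallPn[J2 +]].
rewrite !negb_imply -!ltnNge => /andP[sJ1S lt1] /andP[sJ2S lt2].
have J1s0 := rado_cond_violator radoF sJ1S lt1.
have J2s0 := rado_cond_violator radoF sJ2S lt2.
set X1 := colour_graph _ J1 in lt1; set X2 := colour_graph _ J2 in lt2.
have sUX : colour_graph F (J1 :|: J2) \subset X1 :|: X2.
  apply/subsetP => -[s i]; rewrite !inE /= /drop_colour => /andP[Js].
  case: eqP => [-> Fi | _ Fi]; last by rewrite Fi !andbT.
  rewrite J1s0 J2s0 !inE Fi !andbT /=.
  by case: (eqVneq i j1) => [->|]; rewrite ?j12 ?orbT.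
have sIX : colour_graph F ((J1 :&: J2) :\ s0) \subset X1 :&: X2.
  apply/subsetP => -[s i]; rewrite !inE /= /drop_colour.
  by case/andP => /and3P[/negPf -> J1s J2s] Fi; rewrite J1s J2s Fi.
have hU := leq_trans (radoF' _ _) (copies_rank_mono sUX).
have hI := leq_trans (radoF' _ _) (copies_rank_mono sIX).
have := leq_add (hU _) (hI _); rewrite subUset sJ1S sJ2S.
have := cardsUI J1 J2; have := cardsD1 s0 (J1 :&: J2).
have := copies_rank_submod X1 X2.
rewrite inE J1s0 J2s0 (subset_trans (subsetDl _ _) (subset_trans (subsetIl _ _) sJ1S)).
lia.
Qed.

Lemma independent_colouringW (S : {set 'I_n}) (F F' : 'I_n -> {set 'I_q}) c :
  (forall s, F' s \subset F s) ->
  independent_colouring S F' c -> independent_colouring S F c.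
Proof.
move=> sF'F [cF' indep]; split=> // s Ss.
by have [j cs F'j] := cF' s Ss; exists j => //; apply: subsetP (sF'F s) _ F'j.
Qed.

Lemma rado_singletons (S : {set 'I_n}) (F : 'I_n -> {set 'I_q}) :
  rado_cond S F -> (forall s, s \in S -> #|F s| <= 1) ->
  exists c, independent_colouring S F c.
Proof.
move=> /rado_condP radoF F1.
pose c s := [pick j in F s].
have cF s : s \in S -> exists2 j, c s = Some j & j \in F s.
  move=> Ss; rewrite /c; case: pickP => [j Fj | F0]; first by exists j.
  have graph0 : colour_graph F [set s] = set0.
    apply/setP => -[s' i]; rewrite !inE /=.
    by apply/negP => /andP[/eqP -> Fi]; have := F0 i; rewrite Fi.
  by have := radoF [set s]; rewrite sub1set Ss graph0 copies_rank0 cards1 => /(_ isT).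
exists c; split=> // j; apply: indep_of_card_le_rank => //.
set J := [set s in S | c s == Some j].
have sJS : J \subset S by apply/subsetP => s; rewrite inE => /andP[].
apply: leq_trans (radoF J sJS) _.
rewrite /copies_rank (bigD1 j) //= big1 ?addn0.
  by apply: subset_leq_rank => //; apply/subsetP => s; rewrite !inE => /andP[].
move=> j' j'j; suff -> : slice (colour_graph F J) j' = set0 by apply: rank0.
apply/setP => s; rewrite !inE /=; apply/negP => /andP[/andP[Ss /eqP cs] Fj'].
have [j0 cs' Fj0] := cF s Ss; rewrite cs in cs'; move: cs' Fj0 => [<-] Fj.
by move: j'j; rewrite (card_le1_eqP (F1 s Ss) j j' Fj Fj') eqxx.
Qed.

Theorem rado (S : {set 'I_n}) (F : 'I_n -> {set 'I_q}) :
  rado_cond S F -> exists c, independent_colouring S F c.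
Proof.
have [m] := ubnP (\sum_(s in S) #|F s|); elim: m F => // m IH F ltm radoF.
have [/existsP[s0 /andP[Ss0 /card_gt1P[j1 [j2 [Fj1 Fj2 j12]]]]] | F1] :=
  boolP [exists s in S, 1 < #|F s|]; last first.
  by apply: rado_singletons => // s Ss; move/existsPn: F1 => /(_ s); rewrite Ss -leqNgt.
have drop_ok j : j \in F s0 -> rado_cond S (drop_colour F s0 j) ->
    exists c, independent_colouring S F c.
  move=> Fj /IH[|c col]; first by rewrite -ltnS (drop_colour_sum Ss0 Fj).
  by exists c; apply: independent_colouringW col; apply: drop_colour_sub.
by case/orP: (rado_cond_drop_colour radoF Ss0 j12); apply: drop_ok.
Qed.

Theorem partitionable_of_rank_bound (S : {set 'I_n}) :
  (forall A : {set 'I_n}, A \subset S -> #|A| <= q * rank M A) -> partitionable M S q.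
Proof.
move=> rankS.
have /rado[c [cS indep]] : rado_cond S (fun=> setT).
  apply/rado_condP => J sJS; rewrite /copies_rank (eq_bigr (fun=> rank M J)).
    by rewrite sum_nat_const card_ord; apply: rankS.
  by move=> j _; congr rank; apply/setP => s; rewrite !inE andbT.
exists (fun j => [set s in S | c s == Some j]); split=> //.
  move=> i j ij; rewrite -setI_eq0; apply/eqP/setP => s; rewrite !inE.
  by apply/negP => /andP[/andP[_ /eqP ->] /andP[_ /eqP[ij']]]; rewrite ij' eqxx in ij.
apply/setP => s; apply/bigcupP/idP => [[j _] | Ss]; first by rewrite inE => /andP[].
by have [j cs _] := cS s Ss; exists j => //; rewrite inE Ss cs eqxx.
Qed.

Lemma not_partitionable_witness (S : {set 'I_n}) :
  ~ partitionable M S q -> exists2 A : {set 'I_n}, A \subset S & q * rank M A < #|A|.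
Proof.
move=> notS; have [/existsP[A /andP[sAS ltA]] | /existsPn noA] :=
  boolP [exists A : {set 'I_n}, (A \subset S) && (q * rank M A < #|A|)].
  by exists A.
case: notS; apply: partitionable_of_rank_bound => A sAS.
by have := noA A; rewrite sAS -leqNgt.
Qed.

End Rado.

Lemma card_bigcup_le (T : finType) (k : nat) (P : 'I_k -> {set T}) :
  #|\bigcup_(i < k) P i| <= \sum_(i < k) #|P i|.
Proof.
apply: (big_ind2 (fun (X : {set T}) m => #|X| <= m)) => [|A a B b leAa leBb|//].
  by rewrite cards0.
exact: leq_trans (leq_card_setU A B) (leq_add leAa leBb).
Qed.

Section ClosureInUnion.

Variables (n k : nat) (M : {set {set 'I_n}}) (T : {set 'I_n}).
Hypotheses (matroidM : is_matroid M) (unionT : kfold_union M k T).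

Definition closure_in (B : {set 'I_n}) : {set 'I_n} :=
  [set x in T | (x \in B) || (x |: B \notin M)].

Lemma basis_sub_closure_in (A B : {set 'I_n}) : A \subset T ->
  B \subset A -> #|B| = rank M A -> A \subset closure_in B.
Proof.
move=> sAT sBA cardB; apply/subsetP => x Ax; rewrite inE (subsetP sAT) //=.
apply/orP; case: (boolP (x \in B)) => Bx; [by left | right; apply/negP => MxB].
have := card_le_rank (A := A) MxB; rewrite subUset sub1set Ax sBA cardsU1 Bx cardB.
by move=> /(_ isT); rewrite ltnn.
Qed.

(* Each of the k independent parts of T meets closure_in B in an independent
   set that cannot be augmented from B, hence in at most #|B| elements. *)
Lemma card_closure_in (B : {set 'I_n}) : B \in M -> #|closure_in B| <= k * #|B|.
Proof.
case: unionT => P [_ PT MP] MB.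
have -> : closure_in B = \bigcup_(i < k) (P i :&: closure_in B).
  rewrite -big_distrl /= PT; apply/esym/setIidPr.
  by apply/subsetP => x; rewrite inE => /andP[].
apply: leq_trans (card_bigcup_le _) _.
rewrite -[k in k * _]card_ord -sum_nat_const; apply: leq_sum => i _.
rewrite leqNgt; apply/negP => ltB.
have [|x /setDP[] ] := indep_augment matroidM MB _ ltB.
  by apply: (indepS matroidM (MP i)); apply: subsetIl.
by rewrite !inE => /and3P[_ _]; case: (x \in B) => //= /negP.
Qed.

Lemma rank_gt0_in_union (A : {set 'I_n}) : A \subset T -> 0 < #|A| -> 0 < rank M A.
Proof.
case: unionT => P [_ PT MP] sAT /card_gt0P[a Aa].
have := subsetP sAT a Aa; rewrite -PT => /bigcupP[i _ Pia].
have Ma : [set a] \in M by apply: (indepS matroidM (MP i)); rewrite sub1set.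
by have := card_le_rank (A := A) Ma; rewrite sub1set cards1 => /(_ Aa).
Qed.

End ClosureInUnion.

Local Open Scope ring_scope.

Lemma phi_ge_not_partitionable (R : realType) (n : nat) (M : {set {set 'I_n}})
    (S : {set 'I_n}) (t : R) :
  0 < t -> t <= (phi M S)%:R -> exists2 q : nat, t - 1 <= q%:R & ~ partitionable M S q.
Proof.
move=> t_gt0; rewrite /phi; case: pselect => [exP | noP] t_le; last first.
  by exists n; [rewrite lerBlDr natr1 | move=> Pn; apply: noP; exists n].
case: ex_minnP t_le => -[|q] _ minP t_le.
  by move: (lt_le_trans t_gt0 t_le); rewrite ltxx.
exists q; first by rewrite lerBlDr natr1.
by move=> /asboolT /minP; rewrite ltnn.
Qed.

Lemma large_phi_closure_witness (R : realType) (n k : nat) (M : {set {set 'I_n}})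
    (T S : {set 'I_n}) (t : R) :
  is_matroid M -> kfold_union M k T -> 0 < t -> t <= (phi M (S :&: T))%:R ->
  exists2 B : {set 'I_n}, B != set0 &
    (#|closure_in M T B| <= k * #|B|)%N &&
    ((t - 1) * #|B|%:R <= #|S :&: closure_in M T B|%:R).
Proof.
move=> matroidM unionT t_gt0 /(phi_ge_not_partitionable t_gt0)[q le_q].
case/(not_partitionable_witness matroidM) => A sA ltA.
have [B [MB sBA cardB]] := rank_basis matroidM A.
have sAT : A \subset T := subset_trans sA (subsetIr _ _).
exists B.
  rewrite -card_gt0 cardB (rank_gt0_in_union matroidM unionT) //.
  exact: leq_ltn_trans (leq0n _) ltA.
rewrite (card_closure_in matroidM unionT MB) /=.
have sA_cl : A \subset S :&: closure_in M T B.
  by rewrite subsetI (subset_trans sA (subsetIl _ _)) basis_sub_closure_in.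
apply: le_trans (_ : _ <= (q * #|B|)%:R) _; first by rewrite natrM ler_wpM2r.
by rewrite ler_nat (leq_trans _ (subset_leq_card sA_cl)) // cardB ltnW.
Qed.

Section ExpBounds.

Variable R : realType.
Implicit Types x y : R.

Lemma expR_ge1 x : 0 <= x -> 1 <= expR x.
Proof. by move=> x_ge0; apply: le_trans (expR_ge1Dx x); rewrite lerDl. Qed.

Lemma expRM1B_le1 x : expR x * (1 - x) <= 1.
Proof.
by rewrite -[leRHS](expRxMexpNx_1 x) ler_wpM2l ?expR_ge0 ?expR_ge1Dx.
Qed.

Lemma expRB1_le x : 0 <= x -> x <= 1 / 2 -> expR x - 1 <= x + 2 * x ^+ 2.
Proof.
move=> x_ge0 x_le; have := expRM1B_le1 x; have := expR_ge0 x.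
have : 0 <= x ^+ 2 * (1 - 2 * x) by apply: mulr_ge0; [apply: sqr_ge0 | lra].
nra.
Qed.

Lemma ln_nat_ge_half (n : nat) : (1 < n)%N -> 1 / 2 <= ln (n%:R : R).
Proof.
move=> n_gt1; have n_ge2 : (2 : R) <= n%:R by rewrite (ler_nat R 2).
rewrite -ler_expR lnK ?posrE; last by lra.
by have := @expRM1B_le1 (1 / 2); lra.
Qed.

Lemma sum_pow_card (n : nat) y : \sum_(B : {set 'I_n}) y ^+ #|B| = (y + 1) ^+ n.
Proof.
have := @bigA_distr R 0 1 *%R +%R 'I_n (fun=> y) (fun=> 1).
rewrite prodr_const card_ord => ->.
by apply: eq_bigr => B _; rewrite -big_mkcond /= prodr_const.
Qed.

Lemma sum_nonempty_pow_card_le (n : nat) : (1 < n)%N ->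
  \sum_(B : {set 'I_n} | B != set0) ((n%:R ^+ 5)^-1) ^+ #|B| <= 1 / (n%:R : R) ^+ 3.
Proof.
move=> n_gt1; set N : R := n%:R; set u := N^-1.
have N_ge2 : 2 <= N by rewrite (ler_nat R 2).
have u_gt0 : 0 < u by rewrite invr_gt0; lra.
have u_le : u <= 1 / 2 by rewrite -[leRHS]invf_div divr1 lef_pV2 ?posrE; lra.
rewrite -exprVn -/u mul1r -exprVn -/u.
have := sum_pow_card n (u ^+ 5); rewrite (bigD1 set0) //= cards0 expr0.
set S := \sum_(B | _) _ => sumE.
have le_exp : (u ^+ 5 + 1) ^+ n <= expR (u ^+ 4).
  have -> : u ^+ 4 = n%:R * u ^+ 5.
    by rewrite [in RHS]exprS mulrA -/N /u mulfV ?mul1r //; apply/eqP; lra.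
  rewrite expRM_natl; apply: lerXn2r; rewrite ?nnegrE ?expR_ge0 //.
    by rewrite addr_ge0 // exprn_ge0 // ltW.
  by rewrite addrC expR_ge1Dx.
set y := u ^+ 4 in le_exp; set E := expR y in le_exp.
have y_le : y <= u ^+ 3 / 2.
  by rewrite /y exprS mulrC; apply: ler_wpM2l; [rewrite exprn_ge0 // ltW | lra].
have y_ge0 : 0 <= y by rewrite exprn_ge0 // ltW.
have Ey : E * (1 - y) <= 1 := expRM1B_le1 y.
have u3_le1 : u ^+ 3 <= 1 by rewrite exprn_ile1 // ?ltW //; lra.
have E_le2 : E <= 2 by have := expR_ge0 y; nra.
have : E * y <= 2 * y by apply: ler_wpM2r.
lra.
Qed.

End ExpBounds.

Section Sampling.

Variables (R : realType) (n : nat) (p : R).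
Hypotheses (p_ge0 : 0 <= p) (p_le_half : p <= 1 / 2).

Local Notation outcome := {ffun 'I_n -> bool * bool}.

Lemma outcome_prob_ge0 (om : outcome) : 0 <= outcome_prob p om.
Proof.
have coin_ge0 (b : bool) : 0 <= (if b then 2 * p else 1 - 2 * p) * (1 / 2).
  by move: p_ge0 p_le_half; case: b => ? ?; apply: mulr_ge0; lra.
by apply: prodr_ge0 => i _.
Qed.

Lemma Pr_union_bound (E : pred outcome) (I : finType) (good : pred I)
    (G : I -> pred outcome) :
  (forall om, E om -> exists2 i, good i & G i om) ->
  Pr p E <= \sum_(i | good i) Pr p (G i).
Proof.
move=> EG; rewrite /Pr.
have ge0 om : 0 <= \sum_(i | good i && G i om) outcome_prob p om.
  by apply: sumr_ge0 => j _; apply: outcome_prob_ge0.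
apply: le_trans
  (_ : _ <= \sum_(om | E om) \sum_(i | good i && G i om) outcome_prob p om) _.
  apply: ler_sum => om Eom; have [i gi Gi] := EG om Eom.
  rewrite (bigD1 i) /=; last by rewrite gi Gi.
  by rewrite lerDl; apply: sumr_ge0 => j _; apply: outcome_prob_ge0.
apply: le_trans (_ : _ <= \sum_om \sum_(i | good i && G i om) outcome_prob p om) _.
  by rewrite [leRHS](bigID E) /= lerDl; apply: sumr_ge0.
under eq_bigr do rewrite big_mkcondr /=.
by rewrite exchange_big /=; apply: ler_sum => i _; rewrite -big_mkcond.
Qed.

Lemma sample_mgf (x : R) (F : {set 'I_n}) :
  \sum_(om : outcome) outcome_prob p om * expR (x * #|sampleS om :&: F|%:R) =
  \prod_(i < n) (1 + p * (expR (x * (i \in F)%:R) - 1)).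
Proof.
pose coin i (z : bool * bool) := (if z.1 then 2 * p else 1 - 2 * p) * (1 / 2) *
  expR (x * (z.1 && z.2 && (i \in F))%:R).
have coinE om : outcome_prob p om * expR (x * #|sampleS om :&: F|%:R) =
    \prod_i coin i (om i).
  rewrite /outcome_prob /coin [RHS]big_split /= -expR_sum; congr (_ * expR _).
  rewrite -sum1_card big_mkcond natr_sum mulr_sumr; apply: eq_bigr => i _.
  by rewrite !inE; case: ifP.
under eq_bigr do rewrite coinE.
rewrite -(bigA_distr_bigA coin) /=; apply: eq_bigr => i _.
rewrite -(pair_bigA _ (fun a b => coin i (a, b))) /= !big_bool /coin /=.
by case: (i \in F); rewrite /= ?mulr0 ?mulr1 ?expR0 ?mulr1; field.
Qed.

Lemma Pr_sample_ge_le (x a : R) (F : {set 'I_n}) : 0 <= x ->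
  Pr p (fun om => a <= #|sampleS om :&: F|%:R) <=
  expR (#|F|%:R * (p * (expR x - 1)) - x * a).
Proof.
move=> x_ge0; pose cnt (om : outcome) : R := #|sampleS om :&: F|%:R.
apply: le_trans (_ : _ <= \sum_om outcome_prob p om * expR (x * (cnt om - a))) _.
  rewrite /Pr [leRHS](bigID (fun om => a <= cnt om)) /= -[leLHS]addr0.
  apply: lerD.
    apply: ler_sum => om le_a; rewrite ler_peMr ?outcome_prob_ge0 //.
    by apply: expR_ge1; rewrite mulr_ge0 // subr_ge0.
  by apply: sumr_ge0 => om _; rewrite mulr_ge0 ?outcome_prob_ge0 ?expR_ge0.
have -> : \sum_om outcome_prob p om * expR (x * (cnt om - a)) =
    expR (- (x * a)) * \sum_om outcome_prob p om * expR (x * cnt om).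
  rewrite mulr_sumr; apply: eq_bigr => om _.
  by rewrite mulrCA -expRD mulrBr addrC.
rewrite sample_mgf addrC expRD ler_pM2l ?expR_gt0 //.
have -> : #|F|%:R * (p * (expR x - 1)) = \sum_(i < n) p * (expR (x * (i \in F)%:R) - 1).
  rewrite [RHS](bigID (mem F)) /= [X in _ = _ + X]big1 ?addr0; last first.
    by move=> i /negPf->; rewrite mulr0 expR0 subrr mulr0.
  rewrite -sum1_card natr_sum mulr_suml; apply: eq_bigr => i Fi.
  by rewrite Fi mulr1 mul1r.
rewrite expR_sum; apply: ler_prod => i _; apply/andP; split.
  rewrite -[leLHS](addr0 0) lerD // mulr_ge0 // subr_ge0.
  by apply: expR_ge1; rewrite mulr_ge0.
exact: expR_ge1Dx.
Qed.

End Sampling.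

Section Eps.

Variable R : realType.

Lemma eps_sqrM (C x : R) (n : nat) : 0 < x -> 0 <= ln (n%:R : R) ->
  x * eps C n x ^+ 2 = C ^+ 2 * ln n%:R.
Proof.
move=> x_gt0 L_ge0; rewrite /eps exprMn sqr_sqrtr; last by rewrite divr_ge0 // ltW.
by field; apply: lt0r_neq0.
Qed.

Lemma eps_standing_bounds (C x : R) (n m : nat) : (0 < m)%N ->
  ln (1 / eps C n x) - 2 = m%:R -> 0 < eps C n x <= 1 / 4.
Proof.
move=> m_gt0 lnm; set ex := eps C n x in lnm *.
have m_ge1 : (1 : R) <= m%:R by rewrite ler1n.
have ln_ge3 : 3 <= ln (1 / ex) by lra.
have inv_gt0 : 0 < 1 / ex.
  by rewrite ltNge; apply/negP => /ln0 ln_eq0; move: ln_ge3; rewrite ln_eq0; lra.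
have ex_gt0 : 0 < ex by move: inv_gt0; rewrite div1r invr_gt0.
have inv_ge4 : 4 <= 1 / ex.
  by have := expR_ge1Dx (ln (1 / ex)); rewrite lnK ?posrE //; lra.
rewrite ex_gt0 /=; have : ex * 4 <= ex * (1 / ex) by rewrite ler_pM2l.
by rewrite div1r mulfV ?gt_eqF //; lra.
Qed.

Lemma eps_gt0_bounds (C : R) (n k : nat) : 0 < eps C n k%:R -> (1 < n)%N /\ (0 < k)%N.
Proof.
rewrite /eps => eps_gt0.
have : 0 < Num.sqrt (ln (n%:R : R) / k%:R).
  rewrite lt_neqAle sqrtr_ge0 andbT; apply: contraTneq eps_gt0 => <-.
  by rewrite mulr0 ltxx.
rewrite sqrtr_gt0 => Lk_gt0; split.
  rewrite ltnNge; apply: contraTN Lk_gt0 => n_le1; rewrite -leNgt.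
  by rewrite mulr_le0_ge0 ?invr_ge0 // ln_le0 // (ler_nat R n 1).
by rewrite lt0n; apply: contraTneq Lk_gt0 => ->; rewrite invr0 mulr0 ltxx.
Qed.

(* eps(mu)^2 = k eps(k)^2 / mu <= eps(k), since mu = p k >= eps(k) k. *)
Lemma eps_mul_le_half (C p : R) (n k : nat) : 0 <= C -> (1 < n)%N -> (0 < k)%N ->
  0 < eps C n k%:R <= 1 / 4 -> eps C n k%:R <= p ->
  0 <= eps C n (p * k%:R) <= 1 / 2.
Proof.
move=> C_ge0 n_gt1 k_gt0 /andP[ek_gt0 ek_le] ek_le_p.
set ek := eps C n k%:R in ek_gt0 ek_le ek_le_p; set e := eps C n _.
have L_ge0 : 0 <= ln (n%:R : R) by rewrite ln_ge0 // ler1n ltnW.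
have kR_gt0 : (0 : R) < k%:R by rewrite ltr0n.
have mu_ge : ek * k%:R <= p * k%:R by rewrite ler_pM2r.
have mu_gt0 : 0 < p * k%:R by apply: lt_le_trans mu_ge; apply: mulr_gt0.
have e_ge0 : 0 <= e by rewrite mulr_ge0 ?sqrtr_ge0.
have sqr_eq : p * k%:R * e ^+ 2 = k%:R * ek ^+ 2 by rewrite !eps_sqrM.
have e2_le : e ^+ 2 <= ek.
  have := ler_wpM2r (sqr_ge0 e) mu_ge; rewrite sqr_eq.
  have -> : k%:R * ek ^+ 2 = ek * k%:R * ek by rewrite expr2; ring.
  by rewrite ler_pM2l //; apply: mulr_gt0.
by rewrite e_ge0 /=; nra.
Qed.

End Eps.

(* With [x = e / 4], [K <= k * b] and [mu = p * k], the exponent is at most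
   [b * (e / 4 - mu * e ^ 2 / 8) = b * (e / 4 - C ^ 2 * L / 8)]. *)
Lemma chernoff_exponent_le (R : realType) (C L e p k K b : R) :
  49 <= C ^+ 2 -> 1 / 2 <= L -> p * k * e ^+ 2 = C ^+ 2 * L ->
  0 <= e -> e <= 1 / 2 -> 0 <= p -> 0 <= k -> K <= k * b -> 1 <= b ->
  K * (p * (expR (e / 4) - 1)) - e / 4 * (((1 + e) * (p * k) - 1) * b)
    <= - (b * 5 * L).
Proof.
move=> C2_ge L_ge muE e_ge0 e_le p_ge0 k_ge0 K_le b_ge1.
set E := expR (e / 4).
have E_le : E - 1 <= e / 4 + 2 * (e / 4) ^+ 2 by apply: expRB1_le; lra.
have E_ge : 0 <= E - 1 by rewrite subr_ge0 expR_ge1 //; lra.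
have K_step : K * (p * (E - 1)) <= k * b * (p * (E - 1)).
  by apply: ler_wpM2r => //; apply: mulr_ge0.
have exp_step : k * b * (p * (E - 1)) <= k * b * (p * (e / 4 + 2 * (e / 4) ^+ 2)).
  by apply: ler_wpM2l; [apply: mulr_ge0; lra | apply: ler_wpM2l].
have C_step : b * (e / 4 - C ^+ 2 * L / 8) <= b * (- (5 * L)).
  by apply: ler_wpM2l; nra.
have bmuE : b * (p * k * e ^+ 2) = b * (C ^+ 2 * L) by rewrite muE.
lra.
Qed.

Lemma Pr_sample_tail_le (R : realType) (n k b : nat) (C p e : R) (F : {set 'I_n}) :
  7 <= C -> (1 < n)%N -> 0 <= p -> p <= 1 / 2 ->
  p * k%:R * e ^+ 2 = C ^+ 2 * ln n%:R -> 0 <= e <= 1 / 2 ->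
  (0 < b)%N -> (#|F| <= k * b)%N ->
  Pr p (fun om => ((1 + e) * (p * k%:R) - 1) * b%:R <= #|sampleS om :&: F|%:R)
    <= ((n%:R ^+ 5)^-1) ^+ b.
Proof.
move=> C_ge7 n_gt1 p_ge0 p_le muE /andP[e_ge0 e_le] b_gt0 F_le.
have n_gt0 : (0 : R) < n%:R by rewrite ltr0n ltnW.
have -> : ((n%:R ^+ 5)^-1) ^+ b = expR (- (b%:R * 5 * ln (n%:R : R))).
  by rewrite exprVn expRN -mulrA expRM_natl expRM_natl lnK.
apply: le_trans (Pr_sample_ge_le p_ge0 p_le _ _ (_ : 0 <= e / 4)) _; first lra.
rewrite ler_expR; apply: (chernoff_exponent_le (C := C)) => //.
- have : (0 : R) <= 7 by lra.
  by move=> le07; rewrite expr2; apply: le_trans (ler_pM le07 le07 C_ge7 C_ge7); lra.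
- exact: ln_nat_ge_half.
- by rewrite -natrM ler_nat.
- by rewrite ler1n.
Qed.

Theorem lemma2 (R : realType) :
  exists C0 : R, forall C : R, C0 <= C ->
  forall (n : nat) (M : {set {set 'I_n}}) (w : 'I_n -> R) (k : nat) (p : R)
         (T : {set 'I_n}),
    is_matroid M ->
    (forall i, 0 <= w i) ->
    (forall i j : 'I_n, (i < j)%N -> w j < w i) ->
    (* standing assumptions *)
    (exists m : nat, (0 < m)%N /\ ln (1 / eps C n k%:R) - 2 = m%:R) ->
    160 ^+ 2 * ln (n%:R : R) <= k%:R ->
    (k <= n)%N ->
    eps C n k%:R <= p -> p <= 1 / 2 ->
    is_OPT M k w T ->
    Pr p (fun om => (1 + eps C n (p * k%:R)) * (p * k%:R)
                      <= (phi M (sampleS om :&: T))%:R)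
      <= 1 / ((n%:R : R) ^+ 3).
Proof.
exists 7 => C C_ge7 n M w k p T matroidM _ _ [m [m_gt0 lnm]] _ _ ek_le_p p_le
  [unionT _].
have ek_bounds := eps_standing_bounds m_gt0 lnm.
have /andP[ek_gt0 _] := ek_bounds.
have [n_gt1 k_gt0] := eps_gt0_bounds ek_gt0.
have p_gt0 : 0 < p := lt_le_trans ek_gt0 ek_le_p.
have p_ge0 : 0 <= p := ltW p_gt0.
have mu_gt0 : 0 < p * k%:R by rewrite mulr_gt0 ?ltr0n.
have C_ge0 : 0 <= C by lra.
have := eps_mul_le_half C_ge0 n_gt1 k_gt0 ek_bounds ek_le_p.
set e := eps C n (p * k%:R) => e_bounds.
have muE : p * k%:R * e ^+ 2 = C ^+ 2 * ln n%:R.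
  by rewrite eps_sqrM // ln_ge0 // ler1n ltnW.
have t_gt0 : 0 < (1 + e) * (p * k%:R) by rewrite mulr_gt0 //; lra.
apply: le_trans (sum_nonempty_pow_card_le R n_gt1).
apply: le_trans (Pr_union_bound p_ge0 p_le _) _.
  by move=> om; apply: (large_phi_closure_witness matroidM unionT t_gt0).
apply: ler_sum => B B_neq0.
have [cl_le | _] /= := leqP #|closure_in M T B| (k * #|B|).
  by apply: (Pr_sample_tail_le (C := C)); rewrite // lt0n cards_eq0.
by rewrite /Pr /= big_pred0_eq exprn_ge0 // invr_ge0 exprn_ge0.
Qed.
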